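(* Let $f:2^{\mathcal{E}_x}\to\mathbb{R}_{\ge 0}$ be normalized, monotone and submodular, let $\Delta\ge1$ be the maximum vertex degree of $\mathcal{G}$, and consider $(\mathrm{P}_1)$ under the constraint TU$_b$ (maximize $f(\mathcal{E})$ over $\mathcal{E}\subseteq\mathcal{E}_x$ with $|\mathcal{E}|\le k$ and some vertex cover $\mathcal{V}$ of $\mathcal{E}$ with $|\mathcal{V}|\le b$), with optimal value $\mathrm{OPT}_1$. The algorithm Submodular-Greedy, which runs both Edge-Greedy and Vertex-Greedy and returns whichever of the two returned edge sets has the larger $f$-value, returns a feasible solution with value at least $\alpha(b,k,\Delta)\cdot\mathrm{OPT}_1$, where $\alpha(b,k,\Delta)=1-\exp(-\min\{1,\gamma\})$ and $\gamma=\max\{b/k,\ \lfloor k/\Delta\rfloor/b\}$.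
   Context: $\mathcal{G}=(\mathcal{V}_x,\mathcal{E}_x)$ is a finite simple undirected graph; $b,k\ge1$ are integers. For $\mathcal{V}\subseteq\mathcal{V}_x$, $\mathsf{edges}(\mathcal{V})$ is the set of edges incident to at least one vertex of $\mathcal{V}$. A set function $h$ is normalized if $h(\varnothing)=0$, monotone if $h(A)\le h(B)$ for $A\subseteq B$, submodular if $h(A)+h(B)\ge h(A\cup B)+h(A\cap B)$. Edge-Greedy: Phase I: start with $\mathcal{E}_{\mathrm{grd}}=\varnothing$; for $\min(b,k)$ iterations (or until no edges remain), add an edge $e^\star\in\arg\max_{e\in\mathcal{E}_x\setminus\mathcal{E}_{\mathrm{grd}}}f(\mathcal{E}_{\mathrm{grd}}\cup\{e\})$; then let $\mathcal{V}_{\mathrm{grd}}$ be a vertex cover of $\mathcal{E}_{\mathrm{grd}}$ obtained by choosing one endpoint of each selected edge. Phase II (only if $k>b$): let $\mathcal{E}_{\mathrm{free}}=\mathsf{edges}(\mathcal{V}_{\mathrm{grd}})\setminus\mathcal{E}_{\mathrm{grd}}$; for $\min(|\mathcal{E}_{\mathrm{free}}|,k-b)$ iterations add $e^\star\in\arg\max_{e\in\mathcal{E}_{\mathrm{free}}\setminus\mathcal{E}_{\mathrm{grd}}}f(\mathcal{E}_{\mathrm{grd}}\cup\{e\})$; return $\mathcal{E}_{\mathrm{grd}}$. Vertex-Greedy: with $h(\mathcal{V})=f(\mathsf{edges}(\mathcal{V}))$, start with $\mathcal{V}_{\mathrm{grd}}=\varnothing$ and repeat: pick $v^\star\in\arg\max_{v\in\mathcal{V}_x\setminus\mathcal{V}_{\mathrm{grd}}}h(\mathcal{V}_{\mathrm{grd}}\cup\{v\})$;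 if $|\mathcal{V}_{\mathrm{grd}}\cup\{v^\star\}|>b$ or $|\mathsf{edges}(\mathcal{V}_{\mathrm{grd}}\cup\{v^\star\})|>k$ (or no vertex remains), stop; else add $v^\star$ to $\mathcal{V}_{\mathrm{grd}}$. Return $\mathsf{edges}(\mathcal{V}_{\mathrm{grd}})$. *)

From Stdlib Require Import Reals.
From mathcomp Require Import all_boot.

Set Implicit Arguments.
Unset Strict Implicit.
Unset Printing Implicit Defensive.

(* The edge set E_x is [set: E]. *)
Definition simple_graph (V E : finType) (src dst : E -> V) : Prop :=
  (forall e, src e != dst e) /\
  (forall e1 e2, [set src e1; dst e1] = [set src e2; dst e2] -> e1 = e2).

Section Graph.
Variables (V E : finType) (src dst : E -> V).

Definition edges (S : {set V}) : {set E} :=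
  [set e | (src e \in S) || (dst e \in S)].

Definition degree (v : V) : nat := #|[set e | (src e == v) || (dst e == v)]|.
Definition max_degree : nat := \max_(v : V) degree v.

Definition vertex_cover (C : {set V}) (F : {set E}) : Prop :=
  forall e, e \in F -> (src e \in C) \/ (dst e \in C).

Definition TU_feasible (b k : nat) (F : {set E}) : Prop :=
  #|F| <= k /\ exists C : {set V}, vertex_cover C F /\ #|C| <= b.

Definition normalized (f : {set E} -> R) : Prop := f set0 = R0.
Definition nonnegative (f : {set E} -> R) : Prop := forall A, Rle R0 (f A).
Definition monotone (f : {set E} -> R) : Prop :=
  forall A B : {set E}, A \subset B -> Rle (f A) (f B).
Definition submodular (f : {set E} -> R) : Prop :=
  forall A B : {set E}, Rle (Rplus (f (A :|: B)) (f (A :&: B))) (Rplus (f A) (f B)).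

(* greedy_run f D n S0 S : S is a possible result (under any tie-breaking)
   of n greedy iterations starting from S0, each adding an element
   e \in D \ S maximizing f (S ∪ {e}). *)
Inductive greedy_run (f : {set E} -> R) (D : {set E}) :
    nat -> {set E} -> {set E} -> Prop :=
| greedy_run0 S0 : greedy_run f D 0 S0 S0
| greedy_runS n S0 S e :
    greedy_run f D n S0 S ->
    e \in D :\: S ->
    (forall e', e' \in D :\: S -> Rle (f (e' |: S)) (f (e |: S))) ->
    greedy_run f D n.+1 S0 (e |: S).

Definition endpoint_choice (Egrd : {set E}) (Vgrd : {set V}) : Prop :=
  exists g : E -> V,
    (forall e, e \in Egrd -> g e = src e \/ g e = dst e) /\ Vgrd = g @: Egrd.

Definition edge_greedy_output (f : {set E} -> R) (b k : nat) (Eout : {set E})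
  : Prop :=
  exists E1 : {set E},
    greedy_run f [set: E] (minn (minn b k) #|[set: E]|) set0 E1 /\
    if b < k then
      exists Vgrd : {set V},
        endpoint_choice E1 Vgrd /\
        let Efree := edges Vgrd :\: E1 in
        greedy_run f Efree (minn #|Efree| (k - b)) E1 Eout
    else Eout = E1.

Definition h (f : {set E} -> R) (S : {set V}) : R := f (edges S).

Definition vg_argmax (f : {set E} -> R) (S : {set V}) (v : V) : Prop :=
  v \notin S /\ forall w, w \notin S -> Rle (h f (w |: S)) (h f (v |: S)).

Inductive vg_reach (f : {set E} -> R) (b k : nat) : {set V} -> Prop :=
| vg_reach0 : vg_reach f b k set0
| vg_reachS S v :
    vg_reach f b k S -> vg_argmax f S v ->
    #|v |: S| <= b -> #|edges (v |: S)| <= k ->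
    vg_reach f b k (v |: S).

(* Eout is a possible output of Vertex-Greedy: the loop stops at state S
   either because no vertex remains or because the chosen maximizer v*
   violates one of the two budgets. *)
Definition vertex_greedy_output (f : {set E} -> R) (b k : nat) (Eout : {set E})
  : Prop :=
  exists S : {set V},
    vg_reach f b k S /\
    (S = [set: V] \/
     exists v, vg_argmax f S v /\
               (b < #|v |: S| \/ k < #|edges (v |: S)|)) /\
    Eout = edges S.

End Graph.

Definition gamma_ratio (b k Delta : nat) : R :=
  Rmax (Rdiv (INR b) (INR k)) (Rdiv (INR (k %/ Delta)) (INR b)).
Definition alpha_ratio (b k Delta : nat) : R :=
  Rminus R1 (exp (Ropp (Rmin R1 (gamma_ratio b k Delta)))).

From Stdlib Require Import Reals Lra.
From mathcomp Require Import all_boot.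

Set Implicit Arguments.
Unset Strict Implicit.

(* Both greedy procedures are instances of one classical estimate: if g is
   monotone submodular, O has at most m elements and every step adds an
   element whose marginal gain is maximal among the elements of O, then each
   step shrinks the gap g O - g S by the factor (1 - 1/m); after n steps the
   gap is at most (1 - 1/m)^n g O <= exp (-n/m) g O.
   - Edge-Greedy runs min(b,k) such steps against an optimum F (m = k), and
     its second phase only adds edges, giving the ratio b/k.
   - Vertex-Greedy is the same greedy on h(S) = f(edges S), which is again
     monotone submodular, run against a cover C of F (m = b).  It only stops
     when the budget is exhausted: then |S| >= b, or |S| >= floor(k/Delta)
     since |edges S| <= |S| Delta.  This gives the ratio floor(k/Delta)/b.
   Both outputs are TU_b-feasible, and the better of the two inherits the
   better ratio, i.e. 1 - exp (-min{1, gamma}). *)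

Section RatioFactor.
Local Open Scope R_scope.

Definition ratio_factor (x : R) : R := 1 - exp (- Rmin 1 x).

Lemma contraction_bounds (m : nat) :
  (0 < m)%N -> 0 <= 1 - / INR m <= exp (- / INR m).
Proof.
move=> m_gt0; have m_ge1 : 1 <= INR m by apply: (le_INR 1); apply/leP.
have inv_le1 : / INR m <= 1 by rewrite -Rinv_1; apply: Rinv_le_contravar; lra.
by have := exp_ineq1_le (- / INR m); split; lra.
Qed.

Lemma contraction_pow_le_exp (m n : nat) :
  (0 < m)%N -> (1 - / INR m) ^ n <= exp (- (INR n / INR m)).
Proof.
move=> m_gt0; have [c_ge0 c_le_exp] := contraction_bounds m_gt0.
have m_pos : 0 < INR m by apply: lt_0_INR; apply/ltP.
elim: n => [|n IHn] /=; first by rewrite /Rdiv Rmult_0_l Ropp_0 exp_0; lra.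
have -> : - (INR n.+1 / INR m) = - / INR m + - (INR n / INR m).
  by rewrite S_INR; field; lra.
by rewrite exp_plus; apply: Rmult_le_compat => //; apply: pow_le.
Qed.

(* exp is nondecreasing (Stdlib only states strict monotonicity). *)
Lemma exp_le_mono (x y : R) : x <= y -> exp x <= exp y.
Proof. by case=> [/exp_increasing/Rlt_le | ->] //; apply: Rle_refl. Qed.

Lemma ratio_factor_ge0 (x : R) : 0 <= x -> 0 <= ratio_factor x.
Proof.
move=> x_ge0; have : - Rmin 1 x <= 0 by have := Rmin_glb 1 x 0; lra.
by move/exp_le_mono; rewrite exp_0 /ratio_factor; lra.
Qed.

Lemma ratio_factor_le_value (x G y : R) :
  0 <= G -> G <= y -> ratio_factor x * G <= y.
Proof. by move=> G_ge0 Gy; have := exp_pos (- Rmin 1 x); rewrite /ratio_factor; nra. Qed.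

Lemma ratio_factor_of_gap (x G y : R) (m n : nat) :
  (0 < m)%N -> 0 <= G -> G - y <= (1 - / INR m) ^ n * G ->
  Rmin 1 x <= INR n / INR m -> ratio_factor x * G <= y.
Proof.
move=> m_gt0 G_ge0 gap xn.
have exp_le : exp (- (INR n / INR m)) <= exp (- Rmin 1 x) by apply: exp_le_mono; lra.
have pow_le := contraction_pow_le_exp n m_gt0.
have : (1 - / INR m) ^ n * G <= exp (- Rmin 1 x) * G.
  by apply: Rmult_le_compat_r => //; lra.
by rewrite /ratio_factor; lra.
Qed.

Lemma Rmin_ratio_le (a c n : nat) :
  (0 < c)%N -> (a <= n)%N \/ (c <= n)%N -> Rmin 1 (INR a / INR c) <= INR n / INR c.
Proof.
move=> c_gt0 an_or_cn; have c_pos : 0 < INR c by apply: lt_0_INR; apply/ltP.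
have div_le p q : (p <= q)%N -> INR p / INR c <= INR q / INR c.
  move/leP/le_INR => pq; apply: Rmult_le_compat_r => //.
  by apply/Rlt_le/Rinv_0_lt_compat.
case: an_or_cn => [/div_le | /div_le cn]; first by apply: Rle_trans; apply: Rmin_r.
by apply: Rle_trans (Rmin_l _ _) _; apply: Rle_trans cn; right; field; lra.
Qed.

Lemma ratio_factor_Rmax (x1 x2 G y : R) :
  ratio_factor x1 * G <= y -> ratio_factor x2 * G <= y ->
  ratio_factor (Rmax x1 x2) * G <= y.
Proof. by rewrite /Rmax; case: Rle_dec. Qed.

End RatioFactor.

Section SubmodularGreedy.
Local Open Scope R_scope.
Variables (T : finType) (g : {set T} -> R).
Hypotheses (g_mono : monotone g) (g_submod : submodular g).

Lemma marginal_antitone (S X : {set T}) (a : T) :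
  S \subset X -> g (a |: X) - g X <= g (a |: S) - g S.
Proof.
move=> SX; have := g_submod (a |: S) X.
have : g S <= g ((a |: S) :&: X) by apply: g_mono; rewrite subsetI subsetUr SX.
by rewrite -setUA (setUidPr SX); lra.
Qed.

Lemma union_gain_le (A S : {set T}) (d : R) :
  0 <= d -> (forall a, a \in A -> g (a |: S) - g S <= d) ->
  g (A :|: S) <= g S + INR #|A| * d.
Proof.
move=> d_ge0; have [n] := ubnP #|A|; elim: n A => // n IHn A A_lt gainA.
have [-> | [a aA]] := set_0Vmem A; first by rewrite set0U cards0 INR_0; lra.
have A_eq : A :|: S = a |: ((A :\ a) :|: S) by rewrite setUA setD1K.
have cardA : #|A| = #|A :\ a|.+1 by rewrite (cardsD1 a A) aA.
have IH : g ((A :\ a) :|: S) <= g S + INR #|A :\ a| * d.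
  apply: IHn; first by rewrite -ltnS -cardA.
  by move=> x /setD1P [_ xA]; apply: gainA.
have := marginal_antitone a (subsetUr (A :\ a) S).
by have := gainA a aA; rewrite A_eq cardA S_INR; lra.
Qed.

Lemma greedy_step_gap (O S : {set T}) (e : T) (m : nat) :
  (0 < m)%N -> (#|O| <= m)%N ->
  (forall a, a \in O -> a \notin S -> g (a |: S) <= g (e |: S)) ->
  g O - g (e |: S) <= (1 - / INR m) * (g O - g S).
Proof.
move=> m_gt0 Om e_best; set d := g (e |: S) - g S.
have d_ge0 : 0 <= d by have := g_mono (subsetUr [set e] S); rewrite /d; lra.
have OS_le : g (O :|: S) <= g S + INR #|O| * d.
  apply: union_gain_le => // a aO; have [aS | aS] := boolP (a \in S).
    by rewrite (setUidPr _) ?sub1set //; lra.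
  by have := e_best a aO aS; rewrite /d; lra.
have m_pos : 0 < INR m by apply: lt_0_INR; apply/ltP.
have Om_le : INR #|O| * d <= INR m * d.
  by apply: Rmult_le_compat_r => //; apply/le_INR/leP.
have gap_le : (g O - g S) * / INR m <= d.
  have : g O - g S <= INR m * d by have := g_mono (subsetUl O S); lra.
  move=> gap; apply: Rle_trans (_ : INR m * d * / INR m <= d).
    by apply: Rmult_le_compat_r => //; apply/Rlt_le/Rinv_0_lt_compat.
  by right; field; lra.
have -> : (1 - / INR m) * (g O - g S) = (g O - g S) - (g O - g S) * / INR m by ring.
by rewrite /d in gap_le; lra.
Qed.

Lemma greedy_run_gap (D O S0 S : {set T}) (m n : nat) :
  (0 < m)%N -> (#|O| <= m)%N -> O \subset D -> greedy_run g D n S0 S ->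
  g O - g S <= (1 - / INR m) ^ n * (g O - g S0).
Proof.
move=> m_gt0 Om OD; elim=> [S1 | n' S1 S2 e _ IH _ e_best] /=; first lra.
have [c_ge0 _] := contraction_bounds m_gt0.
apply: Rle_trans (greedy_step_gap m_gt0 Om _) _.
  by move=> a aO aS; apply: e_best; rewrite inE aS (subsetP OD).
by rewrite Rmult_assoc; apply: Rmult_le_compat_l.
Qed.

End SubmodularGreedy.

Lemma greedy_run_facts (T : finType) (g : {set T} -> R) (D S0 S : {set T}) (n : nat) :
  greedy_run g D n S0 S -> [/\ S0 \subset S, S \subset S0 :|: D & #|S| = #|S0| + n].
Proof.
elim=> [S1 | n' S1 S2 e _ [S1S2 S2D cardS2] /setDP [eD eS2]].
  by rewrite subxx subsetUl addn0.
split; first exact: subset_trans S1S2 (subsetUr _ _).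
  by rewrite subUset S2D sub1set inE eD orbT.
by rewrite cardsU1 eS2 cardS2 addnS.
Qed.

Section GraphEdges.
Variables (V E : finType) (src dst : E -> V).
Local Notation edges := (edges src dst).

Lemma edges_mono (A B : {set V}) : A \subset B -> edges A \subset edges B.
Proof.
move=> AB; apply/subsetP => e; rewrite !inE.
by case/orP=> /(subsetP AB) ->; rewrite ?orbT.
Qed.

Lemma edgesU (A B : {set V}) : edges (A :|: B) = edges A :|: edges B.
Proof.
apply/setP => e; rewrite !inE.
by case: (src e \in A); case: (src e \in B); case: (dst e \in A); case: (dst e \in B).
Qed.

Lemma edges0 : edges set0 = set0.
Proof. by apply/setP => e; rewrite !inE. Qed.

Lemma edgesT : edges setT = setT.
Proof. by apply/setP => e; rewrite !inE. Qed.

(* Each vertex contributes at most max_degree edges. *)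
Lemma card_edges_le (A : {set V}) : #|edges A| <= #|A| * max_degree src dst.
Proof.
have [n] := ubnP #|A|; elim: n A => // n IHn A A_lt.
have [-> | [a aA]] := set_0Vmem A; first by rewrite edges0 cards0.
have cardA : #|A| = #|A :\ a|.+1 by rewrite (cardsD1 a A) aA.
rewrite cardA -{1}(setD1K aA) edgesU mulSn.
have -> : edges [set a] = [set e | (src e == a) || (dst e == a)].
  by apply/setP => e; rewrite !inE.
apply: leq_trans (leq_card_setU _ _) _; apply: leq_add.
  exact: (leq_bigmax (F := degree src dst) a).
by apply: IHn; rewrite -ltnS -cardA.
Qed.

Lemma cover_sub_edges (C : {set V}) (F : {set E}) :
  vertex_cover src dst C F -> F \subset edges C.
Proof. by move=> C_cov; apply/subsetP => e /C_cov; rewrite inE => -[] ->; rewrite ?orbT. Qed.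

(* The edges incident to S are covered by S itself. *)
Lemma edges_feasible (b k : nat) (S : {set V}) :
  #|S| <= b -> #|edges S| <= k -> TU_feasible src dst b k (edges S).
Proof. by move=> Sb Sk; split=> //; exists S; split=> // e; rewrite inE => /orP. Qed.

End GraphEdges.

Section VertexGreedy.
Local Open Scope R_scope.
Variables (V E : finType) (src dst : E -> V) (f : {set E} -> R).
Hypotheses (f_mono : monotone f) (f_submod : submodular f).

Lemma h_monotone : monotone (h src dst f).
Proof. by move=> A B AB; apply/f_mono/edges_mono. Qed.

Lemma h_submodular : submodular (h src dst f).
Proof.
move=> A B; rewrite /h edgesU.
have : edges src dst (A :&: B) \subset edges src dst A :&: edges src dst B.
  by rewrite subsetI !edges_mono ?subsetIl ?subsetIr.
by move/f_mono; have := f_submod (edges src dst A) (edges src dst B); lra.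
Qed.

Lemma vg_reach_budget (b k : nat) (S : {set V}) :
  vg_reach src dst f b k S -> (#|S| <= b)%N /\ (#|edges src dst S| <= k)%N.
Proof. by case=> [|S' v _ _ Sb Sk] //; rewrite edges0 !cards0. Qed.

(* Vertex-Greedy is the submodular greedy for h, so its gap to any vertex set
   C with at most b vertices contracts by (1 - 1/b) per chosen vertex. *)
Lemma vg_reach_gap (b k : nat) (C S : {set V}) :
  (0 < b)%N -> (#|C| <= b)%N -> vg_reach src dst f b k S ->
  h src dst f C - h src dst f S <= (1 - / INR b) ^ #|S| * (h src dst f C - h src dst f set0).
Proof.
move=> b_gt0 Cb; elim=> [|S' v _ IH [vS' v_best] _ _]; first by rewrite cards0 /=; lra.
have [c_ge0 _] := contraction_bounds b_gt0.
rewrite cardsU1 vS' add1n /=.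
apply: Rle_trans (greedy_step_gap h_monotone h_submodular b_gt0 Cb _) _.
  by move=> a _ aS'; apply: v_best.
by rewrite Rmult_assoc; apply: Rmult_le_compat_l.
Qed.

Lemma vg_stop_size (b k : nat) (S : {set V}) (v : V) :
  (0 < max_degree src dst)%N ->
  (b < #|v |: S|)%N \/ (k < #|edges src dst (v |: S)|)%N ->
  (k %/ max_degree src dst <= #|S|)%N \/ (b <= #|S|)%N.
Proof.
move=> D_gt0 over; have vS_le : (#|v |: S| <= #|S|.+1)%N.
  by rewrite cardsU1; case: (v \notin S).
case: over => [b_lt | k_lt]; [right | left]; rewrite -ltnS.
  exact: leq_trans b_lt vS_le.
rewrite ltn_divLR //; apply: leq_trans k_lt _.
by apply: leq_trans (card_edges_le _ _ _) _; rewrite leq_mul2r vS_le orbT.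
Qed.

Lemma vertex_greedy_feasible (b k : nat) (Ev : {set E}) :
  vertex_greedy_output src dst f b k Ev -> TU_feasible src dst b k Ev.
Proof. by case=> S [/vg_reach_budget [Sb Sk] [_ ->]]; apply: edges_feasible. Qed.

Lemma vertex_greedy_bound (b k : nat) (Ev F : {set E}) :
  (0 < b)%N -> normalized f -> nonnegative f -> (0 < max_degree src dst)%N ->
  vertex_greedy_output src dst f b k Ev -> TU_feasible src dst b k F ->
  ratio_factor (INR (k %/ max_degree src dst) / INR b) * f F <= f Ev.
Proof.
move=> b_gt0 f0 f_ge0 D_gt0 [S [reachS [stop ->]]] [_ [C [C_cov Cb]]].
have FC : f F <= h src dst f C by apply/f_mono/cover_sub_edges.
case: stop => [-> | [v [_ over]]].
  by apply: ratio_factor_le_value => //; rewrite edgesT; apply/f_mono/subsetT.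
have b_pos : 0 < INR b by apply: lt_0_INR; apply/ltP.
apply: Rle_trans (_ : _ <= ratio_factor (INR (k %/ max_degree src dst) / INR b) *
                             h src dst f C) _.
  apply: Rmult_le_compat_l FC; apply: ratio_factor_ge0.
  by apply: Rmult_le_pos; [apply: pos_INR | apply/Rlt_le/Rinv_0_lt_compat].
apply: (ratio_factor_of_gap (n := #|S|) b_gt0 (f_ge0 _)).
  by have := vg_reach_gap b_gt0 Cb reachS; rewrite /h edges0 f0; lra.
by apply: Rmin_ratio_le b_gt0 _; apply: vg_stop_size D_gt0 over.
Qed.

End VertexGreedy.

Section EdgeGreedy.
Local Open Scope R_scope.
Variables (V E : finType) (src dst : E -> V) (f : {set E} -> R).
Hypotheses (f_mono : monotone f) (f_submod : submodular f).

(* The output of Edge-Greedy contains the result of its first phase: the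
   second phase only adds edges. *)
Lemma edge_greedy_phase1 (b k : nat) (Ee : {set E}) :
  edge_greedy_output src dst f b k Ee ->
  exists2 E1, greedy_run f [set: E] (minn (minn b k) #|[set: E]|) set0 E1 & E1 \subset Ee.
Proof.
case=> E1 [run1 phase2]; exists E1 => //.
case: ifP phase2 => _; last by move=> ->.
by case=> Vg [_ /greedy_run_facts []].
Qed.

(* Choosing an endpoint of each of at most b first-phase edges gives a cover
   of size <= b; the second-phase edges are incident to it and number at
   most k - b. *)
Lemma edge_greedy_feasible (b k : nat) (Ee : {set E}) :
  edge_greedy_output src dst f b k Ee -> TU_feasible src dst b k Ee.
Proof.
case=> E1 [run1 phase2]; have [_ _ cardE1] := greedy_run_facts run1.
rewrite cards0 add0n in cardE1.
have E1b : (#|E1| <= b)%N by rewrite cardE1; apply: leq_trans (geq_minl _ _) (geq_minl _ _).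
case: ltnP phase2 => [bk [Vg [[c [c_end ->]] run2]] | _ ->].
  have [_ EeD cardEe] := greedy_run_facts run2; split.
    rewrite cardEe; apply: (@leq_trans (b + (k - b))); last by rewrite subnKC // ltnW.
    exact: leq_add E1b (geq_minr _ _).
  exists (c @: E1); split; last exact: leq_trans (leq_imset_card _ _) E1b.
  move=> e /(subsetP EeD); rewrite !inE => /orP [eE1 | /andP [_ e_inc]].
    by case: (c_end e eE1) => <-; [left | right]; apply: imset_f.
  by case/orP: e_inc => ->; [left | right].
split; first by rewrite cardE1; apply: leq_trans (geq_minl _ _) (geq_minr _ _).
exists (src @: E1); split; last exact: leq_trans (leq_imset_card _ _) E1b.
by move=> e eE1; left; apply: imset_f.
Qed.

Lemma edge_greedy_bound (b k : nat) (Ee F : {set E}) :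
  (0 < k)%N -> normalized f -> nonnegative f ->
  edge_greedy_output src dst f b k Ee -> TU_feasible src dst b k F ->
  ratio_factor (INR b / INR k) * f F <= f Ee.
Proof.
move=> k_gt0 f0 f_ge0 out [Fk _].
have [E1 run1 E1Ee] := edge_greedy_phase1 out.
apply: Rle_trans (f_mono E1Ee).
have [bk_le | E_lt] := leqP (minn b k) #|[set: E]|.
  rewrite (minn_idPl bk_le) in run1.
  apply: (ratio_factor_of_gap (n := minn b k) k_gt0 (f_ge0 _)).
    by have := greedy_run_gap f_mono f_submod k_gt0 Fk (subsetT F) run1; rewrite f0; lra.
  by apply: Rmin_ratio_le => //; case: (leqP b k) => bk; [left | right];
     rewrite ?(minn_idPl bk) ?(minn_idPr (ltnW bk)).
have [_ _ cardE1] := greedy_run_facts run1.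
have -> : E1 = setT.
  by apply/eqP; rewrite eqEcard subsetT cardE1 cards0 add0n leq_min leqnn ltnW.
by apply: ratio_factor_le_value; [apply: f_ge0 | apply/f_mono/subsetT].
Qed.

End EdgeGreedy.

Unset Implicit Arguments.

Theorem theorem3 (V E : finType) (src dst : E -> V)
  (f : {set E} -> R) (b k : nat) (Ee Ev : {set E}) :
  simple_graph src dst ->
  0 < b -> 0 < k ->
  normalized f -> nonnegative f -> monotone f -> submodular f ->
  0 < max_degree src dst ->
  edge_greedy_output src dst f b k Ee ->
  vertex_greedy_output src dst f b k Ev ->
  let Eout := if Rle_dec (f Ev) (f Ee) then Ee else Ev in
  TU_feasible src dst b k Eout /\
  (forall F : {set E}, TU_feasible src dst b k F ->
     Rle (Rmult (alpha_ratio b k (max_degree src dst)) (f F)) (f Eout)).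
Proof.
move=> _ b_gt0 k_gt0 f0 f_ge0 f_mono f_submod D_gt0 outE outV Eout.
split; first by rewrite /Eout; case: Rle_dec => ?;
  [exact: edge_greedy_feasible outE | exact: vertex_greedy_feasible outV].
move=> F F_feas.
have [EeEout EvEout] : Rle (f Ee) (f Eout) /\ Rle (f Ev) (f Eout).
  by rewrite /Eout; case: Rle_dec => /= ?; split; lra.
change (Rle (Rmult (ratio_factor (gamma_ratio b k (max_degree src dst))) (f F)) (f Eout)).
apply: ratio_factor_Rmax.
  by apply: Rle_trans EeEout; apply: edge_greedy_bound F_feas.
by apply: Rle_trans EvEout; apply: vertex_greedy_bound F_feas.
Qed.
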